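(* For every combinatorial auction with $d$-strong-SOS valuations ($d\ge1$) over single-dimensional signals $s_i\in\{0,1,\dots,k-1\}$ ($k\ge2$ a power of $2$), the mechanism that runs Random Bucket with probability $\frac{d\log_2k}{d\log_2k+2}$ and Random Sampling otherwise is universally ex-post IC-IR and gives a $\big(d(d+1)\log_2k+2(d+1)\big)$-approximation to the optimal social welfare.
   Context: Setting: $n$ agents, $m$ items; agent $i$ has private signal $s_i$; value for bundle $T$ is $v_{iT}(\mathbf{s})\ge0$, public, weakly increasing in each coordinate, strictly in $s_i$. $d$-strong-SOS: for every $j$, $\delta\ge0$, and profiles $\mathbf{s}'\le\mathbf{s}$ coordinate-wise, $d\big(v(\mathbf{s}'_{-j},s'_j+\delta)-v(\mathbf{s}'_{-j},s'_j)\big)\ge v(\mathbf{s}_{-j},s_j+\delta)-v(\mathbf{s}_{-j},s_j)$; every $v_{iT}$ is $d$-strong-SOS. Allocations assign disjoint bundles. Random Bucket: choose $\ell$ uniformly in $\{1,\dots,\log_2k\}$; $N_{B_\ell}=\{i:s_i\ge2^{\ell-1}\}$; for $i\in N_{B_\ell}$, $\bar v_{iT}=v_{iT}(\mathbf{s}_{N_{\neg B_\ell}},\mathbf{2^{\ell-1}}_{N_{B_\ell}})$, else $0$; allocate a $\bar v$-welfare-maximizing allocation among $N_{B_\ell}$; agent receiving $\bar T_i$ pays $v_{i\bar T_i}(\mathbf{s}_{-i},2^{\ell-1}-1)$. Random Sampling: split agents uniformly at random into $A,B$; for $i\in B$, $\tilde v_{iT}=v_{iT}(\mathbf{s}_A,\mathbf{0}_B)$,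 for $i\in A$, $0$; allocate a $\tilde v$-welfare-maximizing allocation among $B$; no payments. *)

From HB Require Import structures.
From mathcomp Require Import all_boot all_order all_algebra.
Set Implicit Arguments. Unset Strict Implicit. Unset Printing Implicit Defensive.
Import Order.TTheory GRing.Theory Num.Theory.
Local Open Scope ring_scope.

Definition profile (n : nat) := 'I_n -> nat.
Definition allocation (n m : nat) := 'I_n -> {set 'I_m}.
(* v i T s = v_{iT}(s). *)
Definition valuations (R : realFieldType) (n m : nat) :=
  'I_n -> {set 'I_m} -> profile n -> R.

Definition upd {n : nat} (s : profile n) (j : 'I_n) (x : nat) : profile n :=
  fun i => if i == j then x else s i.

Definition in_dom {n : nat} (k : nat) (s : profile n) := forall i, (s i < k)%N.
Definition prof_le {n : nat} (s s' : profile n) := forall i, (s i <= s' i)%N.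

Definition feasible {n m : nat} (X : allocation n m) :=
  forall i j, i != j -> [disjoint X i & X j].

Definition welfare {R : realFieldType} {n m : nat}
  (w : 'I_n -> {set 'I_m} -> R) (X : allocation n m) : R :=
  \sum_i w i (X i).

Definition strong_SOS {R : realFieldType} {n : nat} (k : nat) (d : R)
  (f : profile n -> R) :=
  forall (j : 'I_n) (delta : nat) (s' s : profile n),
    in_dom k s -> prof_le s' s -> (s j + delta < k)%N ->
    f (upd s j (s j + delta)) - f s <= d * (f (upd s' j (s' j + delta)) - f s').

Definition valuation_ok {R : realFieldType} {n m : nat} (k : nat) (d : R)
  (v : valuations R n m) :=
  [/\ forall i s, in_dom k s -> v i set0 s = 0,
      forall i T s, in_dom k s -> 0 <= v i T s,
      forall i T s s', in_dom k s' -> prof_le s s' -> v i T s <= v i T s',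
      forall i T s x y, T != set0 -> in_dom k s -> (x < y)%N -> (y < k)%N ->
        v i T (upd s i x) < v i T (upd s i y)
    & forall i T, strong_SOS k d (v i T)].

(* A welfare-maximizing allocation rule (with arbitrary tie-breaking):
   sel S w is a feasible allocation giving nothing outside S and maximizing
   the w-welfare among all such allocations. *)
Definition wm_selector {R : realFieldType} {n m : nat}
  (sel : {set 'I_n} -> ('I_n -> {set 'I_m} -> R) -> allocation n m) :=
  forall S w,
    [/\ feasible (sel S w),
        (forall i, i \notin S -> sel S w i = set0)
      & forall X : allocation n m, feasible X -> (forall i, i \notin S -> X i = set0) ->
          welfare w X <= welfare w (sel S w)].

Section Mechanisms.
Context {R : realFieldType} {n m : nat}.
Variable sel : {set 'I_n} -> ('I_n -> {set 'I_m} -> R) -> allocation n m.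
Variable v : valuations R n m.

(* Random Bucket with bucket index l = j+1, threshold 2^(l-1) = 2^j. *)
Definition bucket_set (j : nat) (r : profile n) : {set 'I_n} :=
  [set i | (2 ^ j <= r i)%N].
Definition bucket_val (j : nat) (r : profile n) : 'I_n -> {set 'I_m} -> R :=
  fun i T => if i \in bucket_set j r
             then v i T (fun a => if a \in bucket_set j r then (2 ^ j)%N else r a)
             else 0.
Definition RB_alloc (j : nat) (r : profile n) : allocation n m :=
  sel (bucket_set j r) (bucket_val j r).
Definition RB_pay (j : nat) (r : profile n) (i : 'I_n) : R :=
  if i \in bucket_set j r then v i (RB_alloc j r i) (upd r i (2 ^ j).-1) else 0.

(* Random Sampling with B the sampled "winning" side, A = ~: B. *)
Definition RS_val (B : {set 'I_n}) (r : profile n) : 'I_n -> {set 'I_m} -> R :=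
  fun i T => if i \in B then v i T (fun a => if a \in B then 0%N else r a) else 0.
Definition RS_alloc (B : {set 'I_n}) (r : profile n) : allocation n m :=
  sel B (RS_val B r).

Definition utility (alloc : profile n -> allocation n m) (pay : profile n -> 'I_n -> R)
  (i : 'I_n) (s r : profile n) : R := v i (alloc r i) s - pay r i.

Definition expost_IC_IR (k : nat) (alloc : profile n -> allocation n m)
  (pay : profile n -> 'I_n -> R) :=
  forall s : profile n, in_dom k s -> forall i : 'I_n,
    0 <= utility alloc pay i s s /\
    forall x, (x < k)%N -> utility alloc pay i s (upd s i x) <= utility alloc pay i s s.

(* expected welfare of the mixed mechanism (L = log2 k) *)
Definition mech_welfare (d : R) (L : nat) (s : profile n) : R :=
  let p := d * L%:R / (d * L%:R + 2) in
  p * (L%:R^-1 * \sum_(j < L) welfare (fun i T => v i T s) (RB_alloc j s))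
  + (1 - p) * ((2 ^ n)%:R^-1 *
       \sum_(B : {set 'I_n}) welfare (fun i T => v i T s) (RS_alloc B s)).
End Mechanisms.

From HB Require Import structures.
From mathcomp Require Import all_boot all_order all_algebra.
From mathcomp Require Import ring lra.
From Stdlib Require Import FunctionalExtensionality.
Import Order.TTheory GRing.Theory Num.Theory.
Local Open Scope ring_scope.
Set Implicit Arguments. Unset Strict Implicit. Unset Printing Implicit Defensive.

(* Every Random-Bucket mechanism is a posted price: agent i wins
   its bundle iff its report reaches the threshold 2^j, and then pays its
   value at signal 2^j - 1 ([threshold_IC], [RB_IC]).  In Random Sampling no
   winner's report influences anything it gets ([RS_IC]).

   For a feasible allocation X split each v_i(X_i; s) into the
   own-signal part v_i(X_i; s) - v_i(X_i; s_{-i}, 0) and the rest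
   v_i(X_i; s_{-i}, 0).
   - Strong-SOS applied twice bounds the own-signal part of agent i by
     d(d+1) times its value in the bucket j with 2^j <= s_i < 2^(j+1)
     ([own_increment_bound]); summing over buckets gives [bucket_welfare].
   - Strong-SOS applied agent by agent ([restrict_chain]) bounds the rest by
     the values at s|~B and at s|~B' for two complementary samples, so on
     average over B it is at most 2(1+d) times the Random-Sampling welfare
     ([sampling_bound], [sampling_welfare]).
   Both bounds rest on [selector_dominates]: the welfare-maximizing choice for
   lowered values beats the restriction of X.  Weighting the two mechanisms
   by dL/(dL+2) and 2/(dL+2) ([mixture_identity]) yields the factor
   d(d+1)L + 2(d+1). *)

Lemma profile_ext n (p q : profile n) : (forall a, p a = q a) -> p = q.
Proof. exact: functional_extensionality. Qed.

Lemma upd_upd n (s : profile n) i x y : upd (upd s i x) i y = upd s i y.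
Proof. by apply: profile_ext => a; rewrite /upd; case: eqP. Qed.

Lemma upd_self n (s : profile n) i : upd s i (s i) = s.
Proof. by apply: profile_ext => a; rewrite /upd; case: eqP => [->|]. Qed.

Lemma upd_dom n k (s : profile n) i x :
  in_dom k s -> (x < k)%N -> in_dom k (upd s i x).
Proof. by move=> hs hx a; rewrite /upd; case: eqP. Qed.

Lemma upd_le n (p q : profile n) i x y :
  prof_le p q -> (x <= y)%N -> prof_le (upd p i x) (upd q i y).
Proof. by move=> hpq hxy a; rewrite /upd; case: eqP. Qed.

Lemma le_dom n k (p q : profile n) : in_dom k q -> prof_le p q -> in_dom k p.
Proof. by move=> hq hpq a; exact: leq_ltn_trans (hpq a) (hq a). Qed.

Definition restrict n (s : profile n) (S : {set 'I_n}) : profile n :=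
  fun a => if a \in S then s a else 0%N.

Lemma restrict_le n (s : profile n) (S : {set 'I_n}) : prof_le (restrict s S) s.
Proof. by move=> a; rewrite /restrict; case: ifP. Qed.

Lemma restrict_dom n k (s : profile n) (S : {set 'I_n}) :
  in_dom k s -> in_dom k (restrict s S).
Proof. by move=> hs; apply: le_dom hs (restrict_le s S). Qed.

Lemma restrict_mono n (s : profile n) (S U : {set 'I_n}) :
  S \subset U -> prof_le (restrict s S) (restrict s U).
Proof. by move=> /subsetP sSU a; rewrite /restrict; case: ifP => // /sSU ->. Qed.

Lemma restrict_add n (s : profile n) (S : {set 'I_n}) j : j \notin S ->
  restrict s (j |: S) = upd (restrict s S) j (restrict s S j + s j).
Proof.
move=> jS; apply: profile_ext => a.
by rewrite /restrict /upd in_setU1 (negbTE jS) add0n; case: eqP => [->|].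
Qed.

Lemma restrict_setC1 n (s : profile n) i : restrict s (~: [set i]) = upd s i 0.
Proof. by apply: profile_ext => a; rewrite /restrict /upd !inE; case: eqP. Qed.

Definition flip n (i : 'I_n) (B : {set 'I_n}) : {set 'I_n} :=
  [set x | (x == i) (+) (x \in B)].

Lemma flipK n (i : 'I_n) : involutive (flip i).
Proof. by move=> B; apply/setP => x; rewrite !inE addbA addbb. Qed.

Lemma in_flip n (i : 'I_n) B : (i \in flip i B) = (i \notin B).
Proof. by rewrite inE eqxx. Qed.

(* Splitting a sum over all subsets of agents according to whether i is in
   the subset: the sets without i are the flips of the sets with i. *)
Lemma sum_sets_by_member (R : realFieldType) n (i : 'I_n)
    (F : {set 'I_n} -> R) :
  \sum_(B : {set 'I_n}) F B
    = \sum_(B : {set 'I_n} | i \in B) F B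
      + \sum_(B : {set 'I_n} | i \in B) F (flip i B).
Proof.
rewrite (bigID (fun B : {set 'I_n} => i \in B)) /=; congr (_ + _).
rewrite (reindex_inj (inv_inj (flipK i))) /=.
by apply: eq_bigl => B; rewrite in_flip negbK.
Qed.

(* The complement of flip i B contains i iff B does, and flipping is a
   bijection of the subsets containing i. *)
Lemma sum_sets_member_flipC (R : realFieldType) n (i : 'I_n)
    (F : {set 'I_n} -> R) :
  \sum_(B : {set 'I_n} | i \in B) F (~: flip i B)
    = \sum_(B : {set 'I_n} | i \in B) F B.
Proof.
have flipCK : involutive (fun B => ~: flip i B).
  by move=> B; apply/setP => x; rewrite !inE; case: (x == i); case: (x \in B).
rewrite [RHS](reindex_inj (inv_inj flipCK)) /=.
by apply: eq_bigl => B; rewrite inE in_flip negbK.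
Qed.

Lemma card_sets n : #|{: {set 'I_n}}| = (2 ^ n)%N.
Proof. by rewrite -cardsT -powersetT card_powerset cardsT card_ord. Qed.

Section StrongSOS.
Variables (R : realFieldType) (n k : nat) (d : R) (f : profile n -> R).
Hypothesis f_sos : strong_SOS k d f.
Hypothesis f_mono : forall p q, in_dom k q -> prof_le p q -> f p <= f q.
Hypothesis f_ge0 : forall p, in_dom k p -> 0 <= f p.
Hypothesis d_ge1 : 1 <= d.

(* Adding the coordinates of U to those of a disjoint S raises f by at most d
   times what the coordinates of U alone contribute: strong-SOS applied one
   agent of U at a time. *)
Lemma restrict_chain (s : profile n) (S U : {set 'I_n}) :
  in_dom k s -> [disjoint S & U] ->
  f (restrict s (S :|: U)) - f (restrict s S)
    <= d * (f (restrict s U) - f (restrict s set0)).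
Proof.
move=> hs; elim: {U}#|U| {-2}U (erefl #|U|) S => [|c IH] U hU S dis.
  by move/eqP: hU; rewrite cards_eq0 => /eqP ->; rewrite setU0 !subrr mulr0.
have [j jU] : exists j, j \in U by apply/set0Pn; rewrite -cards_eq0 hU.
set U' := U :\ j.
have cardU' : #|U'| = c by move: hU; rewrite (cardsD1 j) jU add1n => -[].
have disU' : [disjoint S & U'] by exact: disjointWr (subD1set U j) dis.
have jS : j \notin S by apply: contraTN jU => jS; rewrite (disjointFr dis jS).
have jSU' : j \notin S :|: U' by rewrite in_setU negb_or jS !inE eqxx.
have jU' : j \notin U' by rewrite !inE eqxx.
have defSU : S :|: U = j |: (S :|: U') by rewrite setUCA setD1K.
have defU : U = j |: U' by rewrite setD1K.
have step_j := @f_sos j (s j) _ _ (restrict_dom (S :|: U') hs)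
  (restrict_mono s (subsetUr S U')).
rewrite -!restrict_add // -defSU -defU in step_j.
have jk : (restrict s (S :|: U') j + s j < k)%N.
  by rewrite /restrict (negbTE jSU') add0n; exact: hs.
have := IH U' cardU' S disU'; have := step_j jk; lra.
Qed.

(* Two applications of strong-SOS, the second one using that the
   excess s_i - 2^j is at most 2^j. *)
Lemma own_increment_bound (s b : profile n) i j :
  in_dom k s -> prof_le b s -> b i = (2 ^ j)%N ->
  (2 ^ j <= s i < 2 ^ j.+1)%N ->
  f s - f (upd s i 0) <= d * (d + 1) * f b.
Proof.
move=> hs hbs hbi /andP[lo hi].
have hb : in_dom k b := le_dom hs hbs.
have updi (p : profile n) x : upd p i x i = x by rewrite /upd eqxx.
have b0_le : prof_le (upd b i 0) b by move=> a; rewrite /upd; case: eqP.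
set dl := (s i - 2 ^ j)%N.
have dl_le : (dl <= 2 ^ j)%N.
  by rewrite /dl leq_subLR addnn -mul2n -expnS ltnW.
(* strong-SOS moving agent i from 0 to s_i, at s and at the lower profile b *)
have sos_s : f s - f (upd s i 0)
    <= d * (f (upd b i (s i)) - f (upd b i 0)).
  have := @f_sos i (s i) _ _ (upd_dom i hs (leq_ltn_trans (leq0n _) (hs i)))
    (upd_le i hbs (leqnn 0)).
  by rewrite !updi !add0n !upd_upd upd_self; apply.
(* strong-SOS moving agent i from 2^j to s_i at b, compared with 0 to dl *)
have sos_b : f (upd b i (s i)) - f b <= d * (f (upd b i dl) - f (upd b i 0)).
  have := @f_sos i dl _ _ hb b0_le.
  by rewrite !updi add0n hbi subnKC // upd_upd; apply; apply: hs.
have dl_b : f (upd b i dl) <= f b.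
  apply: f_mono hb _ => a; rewrite /upd; case: eqP => [->|//].
  by rewrite hbi; exact: dl_le.
have zero_ge0 : 0 <= f (upd b i 0).
  exact: f_ge0 (le_dom hb b0_le).
have d_ge0 : 0 <= d by apply: le_trans d_ge1.
set A := f s in sos_s *; set C := f (upd b i (s i)) in sos_s sos_b.
set D := f (upd b i 0) in sos_s sos_b zero_ge0.
set E := f b in sos_b dl_b *; set F := f (upd b i dl) in sos_b dl_b.
have CD : C - D <= (d + 1) * (E - D).
  by have := ler_wpM2l d_ge0 dl_b; lra.
have := ler_wpM2l d_ge0 CD; have := mulr_ge0 d_ge0 (addr_ge0 d_ge0 ler01).
rewrite mulrA; nra.
Qed.

(* For B containing i, the
   agents other than i are split between ~: B and ~: B' with B' = ~: flip i B,
   which again contains i; so strong-SOS gives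
   f(s_{-i}, 0) <= f(s|~B) + d f(s|~B'), and B |-> B' permutes the sets
   containing i. *)
Lemma sampling_bound (s : profile n) (i : 'I_n) :
  in_dom k s ->
  (2 ^ n)%:R * f (upd s i 0)
    <= 2 * (1 + d) * \sum_(B : {set 'I_n} | i \in B) f (restrict s (~: B)).
Proof.
move=> hs.
have d_ge0 : 0 <= d by apply: le_trans d_ge1.
have split_bound (B : {set 'I_n}) : i \in B ->
    f (upd s i 0)
      <= f (restrict s (~: B)) + d * f (restrict s (~: (~: flip i B))).
  move=> iB.
  have dis : [disjoint ~: B & ~: (~: flip i B)].
    rewrite setCK -setI_eq0; apply/eqP/setP => x; rewrite !inE.
    by case: eqP => [->|_]; rewrite ?iB //; case: (x \in B).
  have cover : ~: B :|: ~: (~: flip i B) = ~: [set i].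
    apply/setP => x; rewrite !inE; case: eqP => [->|_]; rewrite ?iB //.
    by case: (x \in B).
  have := restrict_chain hs dis; rewrite cover restrict_setC1.
  have := f_ge0 (restrict_dom set0 hs).
  have := ler_wpM2l d_ge0 (f_ge0 (restrict_dom (~: (~: flip i B)) hs)).
  nra.
have card_half : (2 ^ n)%:R * f (upd s i 0)
    = 2 * \sum_(B : {set 'I_n} | i \in B) f (upd s i 0).
  have -> : (2 ^ n)%:R * f (upd s i 0) = \sum_(B : {set 'I_n}) f (upd s i 0).
    by rewrite sumr_const card_sets mulr_natl.
  by rewrite (sum_sets_by_member i) mulr_natl mulr2n.
rewrite card_half -mulrA ler_pM2l // mulrDl mul1r.
apply: le_trans (ler_sum _ split_bound) _.
rewrite big_split /= -mulr_sumr.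
by rewrite (sum_sets_member_flipC i (fun X => f (restrict s (~: X)))).
Qed.
End StrongSOS.

Lemma threshold_IC (R : realFieldType) (u : nat -> R) (t si : nat) (g : R) :
  (forall x, u x = if (t <= x)%N then g else 0) ->
  ((t <= si)%N -> 0 <= g) -> (~~ (t <= si)%N -> g <= 0) ->
  0 <= u si /\ forall x, u x <= u si.
Proof.
move=> hu gpos gneg; rewrite !hu; split; first by case: ifP => // /gpos.
by move=> x; rewrite hu; case: ifP => tx; case: ifPn => ts //;
  [exact: gneg | exact: gpos].
Qed.

Section Mechanisms.
Variables (R : realFieldType) (n m k : nat) (d : R) (v : valuations R n m).
Variable sel : {set 'I_n} -> ('I_n -> {set 'I_m} -> R) -> allocation n m.
Hypothesis v_ok : valuation_ok k d v.
Hypothesis sel_wm : wm_selector sel.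

(* Both mechanisms value a bundle for agent i at a lowered profile p <= s
   if i is in the set S of active agents, and at 0 otherwise. *)
Lemma masked_val_ge0 (S : {set 'I_n}) (p s : profile n) i T :
  in_dom k s -> prof_le p s -> 0 <= (if i \in S then v i T p else 0).
Proof.
case: v_ok => _ v_ge0 _ _ _ hs hps.
by case: ifP => // _; exact: v_ge0 (le_dom hs hps).
Qed.

Lemma masked_val_le (S : {set 'I_n}) (p s : profile n) i T :
  in_dom k s -> prof_le p s -> (if i \in S then v i T p else 0) <= v i T s.
Proof.
case: v_ok => _ v_ge0 v_mono _ _ hs hps.
by case: ifP => _; [exact: v_mono hps | exact: v_ge0].
Qed.

Lemma masked_val_set0 (S : {set 'I_n}) (p s : profile n) i :
  in_dom k s -> prof_le p s -> (if i \in S then v i set0 p else 0) = 0.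
Proof.
case: v_ok => v_set0 _ _ _ _ hs hps.
by case: ifP => // _; exact: v_set0 (le_dom hs hps).
Qed.

Lemma selector_dominates (S : {set 'I_n}) (w w' : 'I_n -> {set 'I_m} -> R)
    (P : pred 'I_n) (X : allocation n m) :
  feasible X -> (forall i, P i -> i \in S) ->
  (forall i, w i set0 = 0) -> (forall i T, w i T <= w' i T) ->
  \sum_(i | P i) w i (X i) <= welfare w' (sel S w).
Proof.
move=> hX PS w_set0 w_le.
pose XP : allocation n m := fun i => if P i then X i else set0.
have XP_feas : feasible XP.
  move=> a b ab; rewrite /XP.
  by case: ifP => _; case: ifP => _; rewrite ?hX // -setI_eq0 ?setI0 ?set0I.
have XP_out i : i \notin S -> XP i = set0.
  by rewrite /XP; case: ifP => // /PS ->.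
have -> : \sum_(i | P i) w i (X i) = welfare w XP.
  by rewrite /welfare big_mkcond; apply: eq_bigr => i _; rewrite /XP; case: ifP.
case: (sel_wm S w) => _ _ /(_ XP XP_feas XP_out) /le_trans; apply.
by apply: ler_sum => i _; exact: w_le.
Qed.

Lemma bucket_set_upd j (s : profile n) i x y :
  (2 ^ j <= x)%N -> (2 ^ j <= y)%N ->
  bucket_set j (upd s i x) = bucket_set j (upd s i y).
Proof.
move=> hx hy; apply/setP => a.
by rewrite !inE /upd; case: eqP => // _; rewrite hx hy.
Qed.

(* Once agent i is in bucket j, the lowered values no longer depend on i's
   report: its own signal is replaced by the threshold 2^j. *)
Lemma bucket_val_upd j (s : profile n) i x y :
  (2 ^ j <= x)%N -> (2 ^ j <= y)%N ->
  bucket_val v j (upd s i x) = bucket_val v j (upd s i y).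
Proof.
move=> hx hy; rewrite /bucket_val (bucket_set_upd s i hx hy).
apply: functional_extensionality => a; apply: functional_extensionality => T.
case: ifP => // _; congr (v a T _); apply: profile_ext => b.
case: ifP => //; rewrite /upd; case: eqP => // -> /negbT.
by rewrite inE /upd eqxx hy.
Qed.

Lemma RB_utility j (s : profile n) i x :
  in_dom k s ->
  utility v (RB_alloc sel v j) (RB_pay sel v j) i s (upd s i x) =
  if (2 ^ j <= x)%N then
    v i (RB_alloc sel v j (upd s i (2 ^ j)) i) s
    - v i (RB_alloc sel v j (upd s i (2 ^ j)) i) (upd s i (2 ^ j).-1)
  else 0.
Proof.
case: v_ok => v_set0 _ _ _ _ hs.
rewrite /utility /RB_pay.
have inB : (i \in bucket_set j (upd s i x)) = (2 ^ j <= x)%N.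
  by rewrite inE /upd eqxx.
rewrite inB; case: ifP => hx.
  rewrite /RB_alloc (bucket_set_upd s i hx (leqnn _)).
  by rewrite (bucket_val_upd s i hx (leqnn _)) upd_upd.
case: (sel_wm (bucket_set j (upd s i x)) (bucket_val v j (upd s i x))) => _ out _.
by rewrite /RB_alloc out ?inB ?hx // v_set0 // subrr.
Qed.

(* The gain of winning is nonnegative exactly when the true signal reaches
   the threshold, by monotonicity of the valuation in the own signal. *)
Lemma RB_IC L (j : 'I_L) : k = (2 ^ L)%N ->
  expost_IC_IR v k (RB_alloc sel v j) (RB_pay sel v j).
Proof.
move=> hk s hs i.
case: v_ok => _ _ v_mono _ _.
set T := RB_alloc sel v j (upd s i (2 ^ j)) i.
have below_dom : in_dom k (upd s i (2 ^ j).-1).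
  apply: upd_dom => //; rewrite hk; apply: leq_ltn_trans (leq_pred _) _.
  by rewrite ltn_exp2l.
have gain_pos : (2 ^ j <= s i)%N -> 0 <= v i T s - v i T (upd s i (2 ^ j).-1).
  move=> hj; rewrite subr_ge0; apply: v_mono => // a; rewrite /upd.
  by case: eqP => [->|] //; exact: leq_trans (leq_pred _) hj.
have gain_neg : ~~ (2 ^ j <= s i)%N -> v i T s - v i T (upd s i (2 ^ j).-1) <= 0.
  rewrite -ltnNge => hj; rewrite subr_le0; apply: v_mono => // a; rewrite /upd.
  by case: eqP => [->|] //; rewrite -ltnS prednK ?expn_gt0.
have [IR IC] := threshold_IC (fun x => RB_utility j i x hs) gain_pos gain_neg.
by rewrite upd_self in IR IC; split=> // x _; exact: IC.
Qed.

(* In Random Sampling an agent of B is priced at the signals of ~: B only and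
   pays nothing, while an agent outside B gets nothing: no report matters. *)
Lemma RS_IC (B : {set 'I_n}) :
  expost_IC_IR v k (RS_alloc sel v B) (fun _ _ => 0).
Proof.
case: v_ok => v_set0 v_ge0 _ _ _ s hs i.
have report_free x : utility v (RS_alloc sel v B) (fun _ _ => 0) i s (upd s i x)
    = if i \in B then v i (RS_alloc sel v B s i) s else 0.
  rewrite /utility subr0; case: ifP => iB.
    rewrite /RS_alloc; congr (v i (sel B _ i) s).
    apply: functional_extensionality => a; apply: functional_extensionality => T.
    rewrite /RS_val; case: ifP => // _; congr (v a T _); apply: profile_ext => b.
    by case: ifP => // bB; rewrite /upd; case: eqP => // bi; rewrite bi iB in bB.
  case: (sel_wm B (RS_val v B (upd s i x))) => _ out _.
  by rewrite /RS_alloc out ?iB // v_set0.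
have truthful := report_free (s i); rewrite upd_self in truthful.
rewrite truthful; split; first by case: ifP => // _; exact: v_ge0.
by move=> x _; rewrite report_free.
Qed.

Lemma sampling_welfare (s : profile n) (X : allocation n m) :
  1 <= d -> in_dom k s -> feasible X ->
  (2 ^ n)%:R * \sum_i v i (X i) (upd s i 0)
    <= 2 * (1 + d)
       * \sum_(B : {set 'I_n}) welfare (fun i T => v i T s) (RS_alloc sel v B s).
Proof.
case: v_ok => _ v_ge0 _ _ v_sos d1 hs hX.
rewrite mulr_sumr; apply: le_trans.
  apply: ler_sum => i _; apply: (sampling_bound (v_sos i (X i))) => //.
  by move=> p hp; exact: v_ge0.
rewrite -mulr_sumr; apply: ler_wpM2l; first lra.
rewrite (exchange_big_dep xpredT) //=; apply: ler_sum => B _.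
have RS_val_restrict i : i \in B ->
    v i (X i) (restrict s (~: B)) = RS_val v B s i (X i).
  move=> iB; rewrite /RS_val iB; congr (v i (X i) _); apply: profile_ext => a.
  by rewrite /restrict inE; case: (a \in B).
rewrite (eq_bigr (fun i => RS_val v B s i (X i))); last first.
  by move=> i iB; exact: RS_val_restrict.
have zeroB_le : prof_le (fun a => if a \in B then 0%N else s a) s.
  by move=> a; case: ifP.
apply: selector_dominates => // [i | i T].
  exact: masked_val_set0 hs zeroB_le.
exact: masked_val_le hs zeroB_le.
Qed.

Definition bucket_profile j (s : profile n) : profile n :=
  fun a => if a \in bucket_set j s then (2 ^ j)%N else s a.

Lemma bucket_profile_le j (s : profile n) : prof_le (bucket_profile j s) s.
Proof. by move=> a; rewrite /bucket_profile; case: ifP; rewrite // inE. Qed.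

(* Random Bucket recovers the part of the optimum due to the agents' own
   signals: agent i is charged to the bucket j with 2^j <= s_i < 2^(j+1). *)
Lemma bucket_welfare L (s : profile n) (X : allocation n m) :
  k = (2 ^ L)%N -> 1 <= d -> in_dom k s -> feasible X ->
  \sum_i (v i (X i) s - v i (X i) (upd s i 0))
    <= d * (d + 1)
       * \sum_(j < L) welfare (fun i T => v i T s) (RB_alloc sel v j s).
Proof.
case: v_ok => _ v_ge0 v_mono _ v_sos hk d1 hs hX.
pose top (j : 'I_L) x := (2 ^ j <= x < 2 ^ j.+1)%N.
have c_ge0 : 0 <= d * (d + 1) by apply: mulr_ge0; lra.
have term_ge0 (j : 'I_L) i : 0 <= d * (d + 1) * bucket_val v j s i (X i).
  exact: mulr_ge0 c_ge0 (masked_val_ge0 _ _ _ hs (bucket_profile_le j s)).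
have own_le i : v i (X i) s - v i (X i) (upd s i 0)
    <= \sum_(j < L | top j (s i)) d * (d + 1) * bucket_val v j s i (X i).
  have [si0 | si_gt0] := posnP (s i).
    by rewrite -si0 upd_self subrr; apply: sumr_ge0 => j _; exact: term_ge0.
  have lo := trunc_logP (isT : (1 < 2)%N) si_gt0.
  have hi := trunc_log_ltn (s i) (isT : (1 < 2)%N).
  have jL : (trunc_log 2 (s i) < L)%N.
    by rewrite -(ltn_exp2l _ _ (isT : (1 < 2)%N)) -hk (leq_ltn_trans lo (hs i)).
  pose j0 : 'I_L := Ordinal jL.
  rewrite (bigD1 j0) /=; last by rewrite /top lo hi.
  apply: ler_wpDr; first by apply: sumr_ge0 => j _; exact: term_ge0.
  rewrite /bucket_val inE lo.
  apply: (own_increment_bound (v_sos i (X i)) (v_mono i (X i))) => //.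
  - by move=> p hp; exact: v_ge0.
  - exact: bucket_profile_le.
  - by rewrite /bucket_profile inE lo.
  - by rewrite lo hi.
apply: le_trans (ler_sum _ (fun i _ => own_le i)) _.
rewrite (exchange_big_dep xpredT) //= mulr_sumr; apply: ler_sum => j _.
rewrite -mulr_sumr ler_wpM2l //.
apply: selector_dominates => //.
- by move=> i /andP[lo _]; rewrite inE.
- by move=> i; exact: masked_val_set0 hs (bucket_profile_le j s).
- by move=> i T; exact: masked_val_le hs (bucket_profile_le j s).
Qed.
End Mechanisms.

Lemma mixture_identity (R : realFieldType) (d Lr N a b : R) :
  0 < Lr -> 0 < N -> 1 <= d ->
  (d * (d + 1) * Lr + 2 * (d + 1)) *
    (d * Lr / (d * Lr + 2) * (Lr^-1 * a)
     + (1 - d * Lr / (d * Lr + 2)) * (N^-1 * b))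
  = d * (d + 1) * a + 2 * (d + 1) * (N^-1 * b).
Proof.
move=> L_gt0 N_gt0 d_ge1.
have dL2 : d * Lr + 2 != 0.
  by apply: lt0r_neq0; have := mulr_gt0 (lt_le_trans ltr01 d_ge1) L_gt0; lra.
by field; rewrite dL2 !lt0r_neq0.
Qed.

Unset Implicit Arguments.

Theorem mainTheorem16 (R : realFieldType) (n m k L : nat) (d : R)
  (v : valuations R n m)
  (sel : {set 'I_n} -> ('I_n -> {set 'I_m} -> R) -> allocation n m) :
  (0 < L)%N -> k = (2 ^ L)%N -> 1 <= d ->
  valuation_ok k d v -> wm_selector sel ->
  (* universally ex-post IC-IR: every deterministic mechanism in the support *)
  (forall j : 'I_L, expost_IC_IR v k (RB_alloc sel v j) (RB_pay sel v j)) /\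
  (forall B : {set 'I_n}, expost_IC_IR v k (RS_alloc sel v B) (fun _ _ => 0)) /\
  (* approximation to the optimal social welfare *)
  (forall s : profile n, in_dom k s -> forall X : allocation n m, feasible X ->
     welfare (fun i T => v i T s) X
       <= (d * (d + 1) * L%:R + 2 * (d + 1)) * mech_welfare sel v d L s).
Proof.
move=> L_gt0 hk d_ge1 v_ok sel_wm.
split; first by move=> j; exact: (@RB_IC _ _ _ _ _ _ _ v_ok sel_wm _ j hk).
split; first by move=> B; exact: (@RS_IC _ _ _ _ _ _ _ v_ok sel_wm B).
move=> s hs X hX.
have own := bucket_welfare v_ok sel_wm hk d_ge1 hs hX.
have rest := sampling_welfare v_ok sel_wm d_ge1 hs hX.
have N_gt0 : (0 : R) < (2 ^ n)%:R by rewrite ltr0n expn_gt0.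
rewrite /mech_welfare mixture_identity ?ltr0n ?expn_gt0 //.
have -> : welfare (fun i T => v i T s) X
    = \sum_i (v i (X i) s - v i (X i) (upd s i 0)) + \sum_i v i (X i) (upd s i 0).
  by rewrite -big_split /=; apply: eq_bigr => i _; rewrite subrK.
set RB := \sum_(j < L) _ in own *; set RS := \sum_(B : {set 'I_n}) _ in rest *.
have rest' : \sum_i v i (X i) (upd s i 0) <= 2 * (d + 1) * ((2 ^ n)%:R^-1 * RS).
  by rewrite mulrCA ler_pdivlMl // addrC.
lra.
Qed.
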